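(* Let $(X,d)$ be a totally bounded metric space with II-modulus of total boundedness $\gamma$, $\emptyset\ne F\subseteq X$ with representation $(\tilde F_k)$, $G,H:\mathbb{R}_+\to\mathbb{R}_+$ with $G$-modulus $\alpha_G$ and $H$-modulus $\beta_H$, and $(\varepsilon_n)$ a sequence in $\mathbb{R}_+$ with $\sum\varepsilon_i<\infty$ and Cauchy modulus $\xi$. Assume (1) $(x_n)$ is uniformly quasi-$(G,H)$-Fej\'er monotone w.r.t. $F$ (and $(\varepsilon_n)$) with modulus $\chi$, and (2) $(x_n)$ has the liminf property w.r.t. $F$ with liminf-bound $\widehat\Phi$. Then $(x_n)$ is Cauchy and for all $k\in\mathbb{N}$ and $g:\mathbb{N}\to\mathbb{N}$ there exists $N\le\widehat\Psi_0(P)$ such that $d(x_i,x_j)\le\frac1{k+1}$ for all $i,j\in[N,N+g(N)]$, where $P:=\gamma(\alpha_G(4\beta_H(2k+1)+3))+1$, $\chi_g(n,r):=\chi(n,g(n),r)$, $\chi^M_g(n,r):=\max\{\chi_g(i,r)\mid i\le n\}$, and $$\widehat\Psi_0(0):=0,\quad \widehat\Psi_0(n+1):=\widehat\Phi\Big(\chi^M_g\big(\widehat\Psi_0(n),4\beta_H(2k+1)+3\big),\ \xi(4\beta_H(2k+1)+3)\Big).$$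
   Context: II-modulus $\gamma$: for every $k$ and every sequence $(y_n)$ in $X$ there are $0\le i<j\le\gamma(k)$ with $d(y_i,y_j)\le\frac1{k+1}$. Representation: $F=\bigcap_k\tilde F_k$, $AF_k:=\bigcap_{l\le k}\tilde F_l$. $G$-modulus: $a\le\frac1{\alpha_G(k)+1}\Rightarrow G(a)\le\frac1{k+1}$; $H$-modulus: $H(a)\le\frac1{\beta_H(k)+1}\Rightarrow a\le\frac1{k+1}$. Cauchy modulus $\xi$: $\sum_{i=\xi(n)}^\infty\varepsilon_i<\frac1{n+1}$ for all $n$. Uniformly quasi-$(G,H)$-Fej\'er monotone with modulus $\chi:\mathbb{N}^3\to\mathbb{N}$: for all $n,m,r\in\mathbb{N}$, all $p\in AF_{\chi(n,m,r)}$ and all $l\le m$, $H(d(x_{n+l},p))<G(d(x_n,p))+\sum_{i=n}^{n+m-1}\varepsilon_i+\frac1{r+1}$. Liminf property w.r.t. $F$: for all $k,n$ there is $N\ge n$ with $x_N\in AF_k$; then $\widehat\varphi_F(k,n):=\min\{m\ge n\mid x_m\in AF_k\}$, and a liminf-bound is any $\widehat\Phi:\mathbb{N}^2\to\mathbb{N}$, monotone in both arguments, with $\widehat\Phi\ge\widehat\varphi_F$ pointwise. *)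

From Stdlib Require Import Reals Lra Lia.
From Coquelicot Require Import Coquelicot.
Open Scope R_scope.

Definition is_metric {X : Type} (d : X -> X -> R) : Prop :=
  (forall x y, 0 <= d x y) /\
  (forall x y, d x y = 0 <-> x = y) /\
  (forall x y, d x y = d y x) /\
  (forall x y z, d x z <= d x y + d y z).

Definition II_modulus {X : Type} (d : X -> X -> R) (gamma : nat -> nat) : Prop :=
  forall (k : nat) (y : nat -> X),
    exists i j, (i < j)%nat /\ (j <= gamma k)%nat /\ d (y i) (y j) <= / INR (k + 1).

Definition AF {X : Type} (Ft : nat -> X -> Prop) (k : nat) (p : X) : Prop :=
  forall l, (l <= k)%nat -> Ft l p.

Definition G_modulus (G : R -> R) (alphaG : nat -> nat) : Prop :=
  forall k a, 0 <= a -> a <= / INR (alphaG k + 1) -> G a <= / INR (k + 1).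
Definition H_modulus (H : R -> R) (betaH : nat -> nat) : Prop :=
  forall k a, 0 <= a -> H a <= / INR (betaH k + 1) -> a <= / INR (k + 1).

Fixpoint psum (e : nat -> R) (n m : nat) : R :=
  match m with
  | O => 0
  | S m' => psum e n m' + e (n + m')%nat
  end.

Definition cauchy_modulus_series (eps : nat -> R) (xi : nat -> nat) : Prop :=
  forall n, Series (fun i => eps (xi n + i)%nat) < / INR (n + 1).

Definition unif_quasi_GH_fejer {X : Type} (d : X -> X -> R) (Ft : nat -> X -> Prop)
  (G H : R -> R) (eps : nat -> R) (x : nat -> X) (chi : nat -> nat -> nat -> nat) : Prop :=
  forall n m r p, AF Ft (chi n m r) p ->
    forall l, (l <= m)%nat ->
      H (d (x (n + l)%nat) p) < G (d (x n) p) + psum eps n m + / INR (r + 1).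

Definition liminf_property {X : Type} (Ft : nat -> X -> Prop) (x : nat -> X) : Prop :=
  forall k n, exists N, (n <= N)%nat /\ AF Ft k (x N).

Definition is_phihat {X : Type} (Ft : nat -> X -> Prop) (x : nat -> X) (k n m : nat) : Prop :=
  (n <= m)%nat /\ AF Ft k (x m) /\
  (forall m', (n <= m')%nat -> (m' < m)%nat -> ~ AF Ft k (x m')).

Definition liminf_bound {X : Type} (Ft : nat -> X -> Prop) (x : nat -> X)
  (Phi : nat -> nat -> nat) : Prop :=
  (forall k k' n n', (k <= k')%nat -> (n <= n')%nat -> (Phi k n <= Phi k' n')%nat) /\
  (forall k n m, is_phihat Ft x k n m -> (m <= Phi k n)%nat).

Fixpoint chiM (chi : nat -> nat -> nat -> nat) (g : nat -> nat) (n r : nat) : nat :=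
  match n with
  | O => chi O (g O) r
  | S n' => Nat.max (chiM chi g n' r) (chi n (g n) r)
  end.

Fixpoint Psi0 (chi : nat -> nat -> nat -> nat) (g : nat -> nat) (Phi : nat -> nat -> nat)
  (betaH xi : nat -> nat) (k n : nat) : nat :=
  match n with
  | O => O
  | S n' => Phi (chiM chi g (Psi0 chi g Phi betaH xi k n') (4 * betaH (2 * k + 1) + 3)%nat)
                (xi (4 * betaH (2 * k + 1) + 3)%nat)
  end.

Definition cauchy_seq {X : Type} (d : X -> X -> R) (x : nat -> X) : Prop :=
  forall e, 0 < e -> exists N, forall i j, (N <= i)%nat -> (N <= j)%nat -> d (x i) (x j) < e.

(* With K := 4 betaH(2k+1) + 3, choose indices m_n in [xi K, Psi(n+1)] with
   x_{m_n} in AF_{chi^M_g(Psi(n), K)}.  By total boundedness two of the first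
   gamma(alphaG K) + 1 of these points, x_{m_i} and x_{m_j} with i < j, are G-close.  As
   N := m_i <= Psi(j), the point p := x_{m_j} is an approximate element of F precise enough
   for Fejer monotonicity from N for g(N) steps, and beyond xi K the error series is
   negligible; so all x_l with l in [N, N + g N] lie within 1/(2k+2) of p.  Metastability
   for every g in turn gives the Cauchy property. *)

From Stdlib Require Import Reals Lra Lia Classical ClassicalEpsilon.
From Coquelicot Require Import Coquelicot.
Open Scope R_scope.

Lemma Series_nonneg (e : nat -> R) :
  (forall n, 0 <= e n) -> ex_series e -> 0 <= Series e.
Proof.
  intros e_ge0 e_sum.
  replace 0 with (Series (fun _ => 0 * 0)) at 1
    by (rewrite Series_scal_l; ring).
  apply Series_le; [intro n; rewrite Rmult_0_l; split; [lra | apply e_ge0] | exact e_sum].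
Qed.

Lemma psum_add (e : nat -> R) (n m1 m2 : nat) :
  psum e n (m1 + m2) = psum e n m1 + psum e (n + m1) m2.
Proof.
  induction m2 as [|m2 IH]; simpl.
  - rewrite Nat.add_0_r; ring.
  - rewrite Nat.add_succ_r; simpl; rewrite IH.
    replace (n + (m1 + m2))%nat with (n + m1 + m2)%nat by lia; ring.
Qed.

Lemma psum_nonneg (e : nat -> R) (n m : nat) :
  (forall i, 0 <= e i) -> 0 <= psum e n m.
Proof.
  intro e_ge0; induction m as [|m IH]; simpl; [lra|].
  specialize (e_ge0 (n + m)%nat); lra.
Qed.

Lemma psum_S_sum_f_R0 (e : nat -> R) (n m : nat) :
  psum e n (S m) = sum_f_R0 (fun i => e (n + i)%nat) m.
Proof. induction m as [|m IH]; simpl in *; [ring | rewrite <- IH; ring]. Qed.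

Lemma psum_le_Series (e : nat -> R) (n m : nat) :
  (forall i, 0 <= e i) -> ex_series e ->
  psum e n m <= Series (fun i => e (n + i)%nat).
Proof.
  intros e_ge0 e_sum.
  assert (tail_sum : forall s, ex_series (fun i => e (s + i)%nat))
    by (intro s; now apply ex_series_incr_n).
  destruct m as [|m].
  - apply Series_nonneg; auto.
  - pose proof (Series_incr_n (fun i => e (n + i)%nat) (S m) ltac:(lia) (tail_sum n))
      as split_series.
    assert (0 <= Series (fun i => e (n + (S m + i))%nat)).
    { apply Series_nonneg; [auto|].
      apply (ex_series_incr_n (fun i => e (n + i)%nat)), tail_sum. }
    rewrite psum_S_sum_f_R0; change (Init.Nat.pred (S m)) with m in split_series; lra.
Qed.

Lemma psum_le_Series_tail (e : nat -> R) (s n m : nat) :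
  (forall i, 0 <= e i) -> ex_series e -> (s <= n)%nat ->
  psum e n m <= Series (fun i => e (s + i)%nat).
Proof.
  intros e_ge0 e_sum le_sn.
  pose proof (psum_add e s (n - s) m) as split_sum.
  replace (s + (n - s))%nat with n in split_sum by lia.
  pose proof (psum_nonneg e s (n - s) e_ge0).
  pose proof (psum_le_Series e s (n - s + m) e_ge0 e_sum).
  lra.
Qed.

Lemma inv_INR_4S (b : nat) : / INR (4 * b + 3 + 1) = / 4 * / INR (b + 1).
Proof.
  rewrite !plus_INR, mult_INR; simpl INR.
  pose proof (pos_INR b); field; lra.
Qed.

Lemma inv_INR_2S (k : nat) : / INR (2 * k + 1 + 1) = / 2 * / INR (k + 1).
Proof.
  rewrite !plus_INR, mult_INR; simpl INR.
  pose proof (pos_INR k); field; lra.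
Qed.

Lemma liminf_property_phihat {X : Type} (Ft : nat -> X -> Prop) (x : nat -> X) :
  liminf_property Ft x -> forall k n, exists m, is_phihat Ft x k n m.
Proof.
  intros liminf k n; destruct (liminf k n) as [N [le_nN AF_N]].
  revert le_nN AF_N.
  induction N as [N IH] using (well_founded_induction Wf_nat.lt_wf); intros le_nN AF_N.
  destruct (classic (exists m, (n <= m)%nat /\ (m < N)%nat /\ AF Ft k (x m)))
    as [[m [le_nm [lt_mN AF_m]]] | no_earlier].
  - exact (IH m lt_mN le_nm AF_m).
  - exists N; repeat split; auto.
    intros m le_nm lt_mN AF_m; apply no_earlier; eauto.
Qed.

Lemma chiM_ge (chi : nat -> nat -> nat -> nat) (g : nat -> nat) (r i n : nat) :
  (i <= n)%nat -> (chi i (g i) r <= chiM chi g n r)%nat.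
Proof.
  induction n as [|n IH]; intro le_in; simpl.
  - replace i with O by lia; lia.
  - destruct (Nat.eq_dec i (S n)) as [-> | ne]; [lia|].
    specialize (IH ltac:(lia)); lia.
Qed.

Lemma chiM_mono (chi : nat -> nat -> nat -> nat) (g : nat -> nat) (r n n' : nat) :
  (n <= n')%nat -> (chiM chi g n r <= chiM chi g n' r)%nat.
Proof. induction 1; simpl; lia. Qed.

Lemma Psi0_mono (chi : nat -> nat -> nat -> nat) (g : nat -> nat)
  (Phi : nat -> nat -> nat) (betaH xi : nat -> nat) (k n n' : nat) :
  (forall a a' b b', (a <= a')%nat -> (b <= b')%nat -> (Phi a b <= Phi a' b')%nat) ->
  (n <= n')%nat ->
  (Psi0 chi g Phi betaH xi k n <= Psi0 chi g Phi betaH xi k n')%nat.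
Proof.
  intros Phi_mono.
  assert (step : forall i, (Psi0 chi g Phi betaH xi k i
                            <= Psi0 chi g Phi betaH xi k (S i))%nat).
  { induction i as [|i IH]; [simpl; lia|].
    apply Phi_mono; [apply chiM_mono, IH | lia]. }
  induction 1 as [|n' _ IH]; [lia|]; specialize (step n'); lia.
Qed.

Lemma metastable_cauchy {X : Type} (d : X -> X -> R) (x : nat -> X) :
  (forall (k : nat) (g : nat -> nat), exists N,
     forall i j, (N <= i <= N + g N)%nat -> (N <= j <= N + g N)%nat ->
       d (x i) (x j) <= / INR (k + 1)) ->
  cauchy_seq d x.
Proof.
  intros metastable e e_pos; apply NNPP; intro not_cauchy.
  assert (far : forall N, exists ij : nat * nat,
             (N <= fst ij)%nat /\ (N <= snd ij)%nat /\ e <= d (x (fst ij)) (x (snd ij))).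
  { intro N; apply NNPP; intro no_pair; apply not_cauchy; exists N.
    intros i j le_Ni le_Nj; apply Rnot_le_lt; intro close.
    apply no_pair; exists (i, j); auto. }
  destruct (choice _ far) as [f far_f].
  destruct (archimed_cor1 e e_pos) as [k [lt_k_e k_pos]].
  (* Let g(N) reach the e-apart pair found beyond N; metastability then closes it to 1/k < e. *)
  destruct (metastable (k - 1)%nat (fun N => Nat.max (fst (f N)) (snd (f N)) - N)%nat)
    as [N close].
  destruct (far_f N) as [le1 [le2 dist_ge]].
  specialize (close (fst (f N)) (snd (f N)) ltac:(lia) ltac:(lia)).
  replace (k - 1 + 1)%nat with k in close by lia.
  lra.
Qed.

Section Metastability.

Variables (X : Type) (d : X -> X -> R) (gamma : nat -> nat) (Ft : nat -> X -> Prop)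
  (G H : R -> R) (alphaG betaH : nat -> nat) (eps : nat -> R) (xi : nat -> nat)
  (x : nat -> X) (chi : nat -> nat -> nat -> nat) (Phi : nat -> nat -> nat).

Hypothesis d_metric : is_metric d.
Hypothesis gamma_modulus : II_modulus d gamma.
Hypothesis alphaG_modulus : G_modulus G alphaG.
Hypothesis betaH_modulus : H_modulus H betaH.
Hypothesis eps_ge0 : forall n, 0 <= eps n.
Hypothesis eps_summable : ex_series eps.
Hypothesis xi_modulus : cauchy_modulus_series eps xi.
Hypothesis x_fejer : unif_quasi_GH_fejer d Ft G H eps x chi.
Hypothesis x_liminf : liminf_property Ft x.
Hypothesis Phi_bound : liminf_bound Ft x Phi.

Lemma d_nonneg (a b : X) : 0 <= d a b.
Proof. apply d_metric. Qed.

(* All three error terms are below 1/(K+1) = 1/(4(betaH j + 1)), so H(d) < 1/(betaH j + 1). *)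
Lemma fejer_ball (j N m : nat) (p : X) :
  let K := (4 * betaH j + 3)%nat in
  AF Ft (chi N m K) p -> G (d (x N) p) <= / INR (K + 1) -> (xi K <= N)%nat ->
  forall l, (l <= m)%nat -> d (x (N + l)%nat) p <= / INR (j + 1).
Proof.
  intros K AF_p G_close le_xi l le_lm.
  assert (tail_small : psum eps N m < / INR (K + 1)).
  { eapply Rle_lt_trans; [apply (psum_le_Series_tail eps (xi K)); auto | apply xi_modulus]. }
  pose proof (x_fejer N m K p AF_p l le_lm) as fejer.
  assert (0 < / INR (betaH j + 1))
    by (apply Rinv_0_lt_compat, lt_0_INR; lia).
  apply betaH_modulus; [apply d_nonneg|].
  unfold K in *; rewrite inv_INR_4S in *; lra.
Qed.

Lemma liminf_point (a b : nat) : exists m, (b <= m)%nat /\ (m <= Phi a b)%nat /\ AF Ft a (x m).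
Proof.
  destruct (liminf_property_phihat Ft x x_liminf a b) as [m phihat_m].
  exists m; destruct phihat_m as [le_bm [AF_m first]].
  repeat split; auto; apply Phi_bound; repeat split; auto.
Qed.

Theorem metastability (k : nat) (g : nat -> nat) :
  exists N, (N <= Psi0 chi g Phi betaH xi k (gamma (alphaG (4 * betaH (2 * k + 1) + 3)) + 1))%nat /\
    forall i j, (N <= i <= N + g N)%nat -> (N <= j <= N + g N)%nat ->
      d (x i) (x j) <= / INR (k + 1).
Proof.
  set (K := (4 * betaH (2 * k + 1) + 3)%nat).
  set (Psi := Psi0 chi g Phi betaH xi k).
  assert (Psi_mono : forall n n', (n <= n')%nat -> (Psi n <= Psi n')%nat)
    by (intros; apply Psi0_mono; auto; apply Phi_bound).
  destruct (choice _ (fun n => liminf_point (chiM chi g (Psi n) K) (xi K))) as [m m_spec].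
  destruct (gamma_modulus (alphaG K) (fun n => x (m n))) as [i [j [lt_ij [le_j G_close]]]].
  destruct (m_spec i) as [le_xi_i [le_i _]], (m_spec j) as [_ [_ AF_j]].
  change (m i <= Psi (S i))%nat in le_i.
  set (N := m i).
  assert (le_N_Psi_j : (N <= Psi j)%nat) by (pose proof (Psi_mono (S i) j); unfold N; lia).
  exists N; split.
  { pose proof (Psi_mono (S i) (gamma (alphaG K) + 1)%nat); unfold N; lia. }
  assert (near : forall l, (N <= l <= N + g N)%nat ->
                   d (x l) (x (m j)) <= / INR (2 * k + 1 + 1)).
  { intros l [le_Nl le_l].
    replace l with (N + (l - N))%nat by lia.
    apply fejer_ball with (m := g N); [| apply alphaG_modulus, G_close; apply d_nonneg
                                       | exact le_xi_i | lia].
    intros l' le_l'; apply AF_j; fold K in le_l'.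
    pose proof (chiM_ge chi g K N (Psi j) le_N_Psi_j); lia. }
  intros a b range_a range_b.
  destruct d_metric as [_ [_ [d_sym d_triangle]]].
  pose proof (near a range_a); pose proof (near b range_b).
  pose proof (d_triangle (x a) (x (m j)) (x b)); rewrite (d_sym (x (m j))) in *.
  rewrite inv_INR_2S in *; lra.
Qed.

End Metastability.

Theorem theorem6p4 (X : Type) (d : X -> X -> R) (gamma : nat -> nat)
  (F : X -> Prop) (Ft : nat -> X -> Prop)
  (G H : R -> R) (alphaG betaH : nat -> nat)
  (eps : nat -> R) (xi : nat -> nat)
  (x : nat -> X) (chi : nat -> nat -> nat -> nat) (Phi : nat -> nat -> nat) :
  is_metric d ->
  II_modulus d gamma ->
  (exists p, F p) ->
  (forall p, F p <-> forall k, Ft k p) ->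
  (forall a, 0 <= a -> 0 <= G a) ->
  (forall a, 0 <= a -> 0 <= H a) ->
  G_modulus G alphaG ->
  H_modulus H betaH ->
  (forall n, 0 <= eps n) ->
  ex_series eps ->
  cauchy_modulus_series eps xi ->
  unif_quasi_GH_fejer d Ft G H eps x chi ->
  liminf_property Ft x ->
  liminf_bound Ft x Phi ->
  cauchy_seq d x /\
  (forall (k : nat) (g : nat -> nat),
     exists N, (N <= Psi0 chi g Phi betaH xi k (gamma (alphaG (4 * betaH (2 * k + 1) + 3)) + 1))%nat /\
       forall i j, (N <= i <= N + g N)%nat -> (N <= j <= N + g N)%nat ->
         d (x i) (x j) <= / INR (k + 1)).
Proof.
  (* F enters only through its representation Ft. *)
  intros d_metric gamma_mod _ _ _ _ G_mod H_mod eps_ge0 eps_sum xi_mod fejer liminf Phi_bound.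
  assert (bound := metastability X d gamma Ft G H alphaG betaH eps xi x chi Phi
                     d_metric gamma_mod G_mod H_mod eps_ge0 eps_sum xi_mod fejer liminf Phi_bound).
  split; [|exact bound].
  apply metastable_cauchy; intros k g.
  destruct (bound k g) as [N [_ close]]; eauto.
Qed.
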